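(* Let $G_1$ and $G_2$ be bi-fuzzy automata with event sets $\hat\Sigma_1,\hat\Sigma_2$ over crisp state sets of sizes $m$ and $n$, and let $G_1\|G_2$ be their parallel composition. Then for every $s\in(\hat\Sigma_1\cup\hat\Sigma_2)^*$, $$L_{G_1\|G_2}(s)=L_{G_1}(s)\sqcap L_{G_2}(s),$$ where $L_{G_i}(s)$ is computed by letting each event not in $\hat\Sigma_i$ act in $G_i$ as the identity matrix $I_i$.
   Context: $NCFD$ is the set of normal convex type-1 fuzzy sets $\mu:[0,1]\to[0,1]$ ($\max_u\mu(u)=1$, and $\mu(u_j)\ge\min\{\mu(u_i),\mu(u_k)\}$ for $u_i\le u_j\le u_k$); $a/u_0$ denotes the fuzzy set with value $a$ at $u_0$ and $0$ elsewhere. Operations: $(\mu_1\sqcup\mu_2)(v)=\sup\{\min(\mu_1(u),\mu_2(w)):\max(u,w)=v\}$, $(\mu_1\sqcap\mu_2)(v)=\sup\{\min(\mu_1(u),\mu_2(w)):\min(u,w)=v\}$. Matrix composition: $(R\odot S)(x,z)=\bigsqcup_y[R(x,y)\sqcap S(y,z)]$. Bi-fuzzy tensor: for $\hat A=[\tilde a_{ij}]$ ($k\times m$), $\hat B$ ($p\times s$), $\hat A\otimes\hat B$ is the $kp\times ms$ block matrix with $(i,j)$ block $[\tilde a_{ij}\sqcap\tilde b_{pq}]_{p,q}$. A bi-fuzzy automaton $G=(\hat X,\hat\Sigma,\delta,\hat x_0,\hat x_m)$ over a crisp state set of size $n$ has bi-fuzzy states = row vectors in $NCFD^n$, events $\sigma\in\hat\Sigma$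 given by $n\times n$ matrices over $NCFD$, $\delta(\hat x,\sigma)=\hat x\odot\sigma$, initial and final bi-fuzzy states $\hat x_0,\hat x_m\in NCFD^n$. Its generated language $L_G:\hat\Sigma^*\to NCFD$ is $L_G(\epsilon)=1/1$ and $L_G(\sigma_1\cdots\sigma_k)=\hat x_0\odot\sigma_1\odot\cdots\odot\sigma_k\odot A_n^T$, with $A_n=[1/1,\dots,1/1]$ of length $n$. The unit matrix $I_n$ has $1/1$ on the diagonal and $1/0$ elsewhere. For $G_i=(\hat X_i,\hat\Sigma_i,\delta_i,\hat x_{0i},\hat x_{mi})$, $i=1,2$, with state sets of sizes $m$ and $n$, the parallel composition $G_1\|G_2$ is the bi-fuzzy automaton over a crisp state set of size $mn$ with initial state $\hat x_{01}\otimes\hat x_{02}$, final state $\hat x_{m1}\otimes\hat x_{m2}$, event set $\hat\Sigma_1\cup\hat\Sigma_2$, transitions $(\hat x_1\otimes\hat x_2,\sigma)\mapsto(\hat x_1\otimes\hat x_2)\odot\sigma$, where the matrix of $\sigma$ is $\sigma_1\otimes\sigma_2$ if $\sigma\in\hat\Sigma_1\cap\hat\Sigma_2$ ($\sigma_i$ its matrix in $G_i$), $\sigma_1\otimes I_n$ if $\sigma\in\hat\Sigma_1\setminus\hat\Sigma_2$, and $I_m\otimes\sigma_2$ if $\sigma\in\hat\Sigma_2\setminus\hat\Sigma_1$. *)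

From HB Require Import structures.
From mathcomp Require Import all_boot all_order all_algebra.
From mathcomp Require Import classical_sets reals.
Set Implicit Arguments. Unset Strict Implicit. Unset Printing Implicit Defensive.
Import Order.TTheory GRing.Theory Num.Theory.
Local Open Scope ring_scope.
Local Open Scope classical_set_scope.

Section BiFuzzy.
Variable R : realType.

(* type-1 fuzzy sets over the unit interval: functions [0,1] -> [0,1];
   represented as functions R -> R, only their values on [0,1] matter. *)
Definition fuzzy := R -> R.

Definition in01 (u : R) : Prop := 0 <= u <= 1.

Definition NCFD (mu : fuzzy) : Prop :=
  (forall u, in01 u -> 0 <= mu u <= 1) /\
  (exists2 u, in01 u & mu u = 1) /\
  (forall ui uj uk, in01 ui -> in01 uk -> ui <= uj <= uk ->
       Num.min (mu ui) (mu uk) <= mu uj).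

(* a / u0 : value a at u0, 0 elsewhere *)
Definition fsingle (a u0 : R) : fuzzy := fun u => if u == u0 then a else 0.

Definition fjoin (mu1 mu2 : fuzzy) : fuzzy := fun v =>
  sup [set r | exists u w, [/\ in01 u, in01 w, Num.max u w = v &
                                 r = Num.min (mu1 u) (mu2 w)]].

Definition fmeet (mu1 mu2 : fuzzy) : fuzzy := fun v =>
  sup [set r | exists u w, [/\ in01 u, in01 w, Num.min u w = v &
                                 r = Num.min (mu1 u) (mu2 w)]].

(* the unit 1/0 of the join, used for the iterated join *)
Definition fbot : fuzzy := fsingle 1 0.
Definition ftop : fuzzy := fsingle 1 1.

Definition fcomp k m p (A : 'M[fuzzy]_(k, m)) (B : 'M[fuzzy]_(m, p))
  : 'M[fuzzy]_(k, p) :=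
  \matrix_(i, j) \big[fjoin/fbot]_(y < m) fmeet (A i y) (B y j).

Definition funit n : 'M[fuzzy]_n :=
  \matrix_(i, j) if i == j then ftop else fbot.

Definition fones n : 'rV[fuzzy]_n := const_mx ftop.

(* index decomposition for the tensor: k = k1 * n + k2 *)
Lemma tens_index_proof1 m n (k : 'I_(m * n)) : (k %/ n < m)%N.
Proof. by move: m n k=> [_ [] //|m] [|n] k; rewrite ?divn0 // ltn_divLR. Qed.
Lemma tens_index_proof2 m n (k : 'I_(m * n)) : (k %% n < n)%N.
Proof. by rewrite ltn_mod; case: n k=> //; rewrite muln0=> [] []. Qed.
Definition tens_row m n (k : 'I_(m * n)) : 'I_m := Ordinal (tens_index_proof1 k).
Definition tens_col m n (k : 'I_(m * n)) : 'I_n := Ordinal (tens_index_proof2 k).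

(* bi-fuzzy tensor: (i,j) block of A (x) B is [a_ij \sqcap b_pq]_{p,q} *)
Definition ftens k m p s (A : 'M[fuzzy]_(k, m)) (B : 'M[fuzzy]_(p, s))
  : 'M[fuzzy]_(k * p, m * s) :=
  \matrix_(i, j) fmeet (A (tens_row i) (tens_row j)) (B (tens_col i) (tens_col j)).

Record bfa (E : Type) (n : nat) := BFA {
  bfa_ev : pred E;
  bfa_trans : E -> 'M[fuzzy]_n;
  bfa_x0 : 'rV[fuzzy]_n;
  bfa_xm : 'rV[fuzzy]_n }.

Definition NCFD_mx k m (A : 'M[fuzzy]_(k, m)) : Prop :=
  forall i j, NCFD (A i j).

Definition bfa_wf E n (G : bfa E n) : Prop :=
  [/\ NCFD_mx (bfa_x0 G), NCFD_mx (bfa_xm G) &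
      forall e, bfa_ev G e -> NCFD_mx (bfa_trans G e)].

Definition lang_with E n (x0 : 'rV[fuzzy]_n) (M : E -> 'M[fuzzy]_n)
  (s : seq E) : fuzzy :=
  if s is [::] then ftop
  else (fcomp (foldl (fun x e => fcomp x (M e)) x0 s) (fones n)^T) 0 0.

Definition lang E n (G : bfa E n) (s : seq E) : fuzzy :=
  lang_with (bfa_x0 G) (bfa_trans G) s.

Definition lang_ext E n (G : bfa E n) (s : seq E) : fuzzy :=
  lang_with (bfa_x0 G)
    (fun e => if bfa_ev G e then bfa_trans G e else funit n) s.

Definition par E m n (G1 : bfa E m) (G2 : bfa E n) : bfa E (m * n) :=
  BFA (predU (bfa_ev G1) (bfa_ev G2))
      (fun e => if bfa_ev G1 e && bfa_ev G2 e then
                  ftens (bfa_trans G1 e) (bfa_trans G2 e)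
                else if bfa_ev G1 e then ftens (bfa_trans G1 e) (funit n)
                else ftens (funit m) (bfa_trans G2 e))
      (ftens (bfa_x0 G1) (bfa_x0 G2))
      (ftens (bfa_xm G1) (bfa_xm G2)).
End BiFuzzy.

(* A normal convex fuzzy truth value f on [0,1] with peak p is the pointwise
   minimum of a nondecreasing part fL (equal to f left of p and to 1 right of
   it) and a nonincreasing part fR.  In these coordinates the sup-min
   operations become pointwise: f ⊔ g = (fL ∧ gL) ∧ (fR ∨ gR), and f ⊓ g,
   which is ⊔ conjugated by the reflection x ↦ 1 - x, is (fL ∨ gL) ∧ (fR ∧ gR).
   Hence these truth values (normalised to vanish outside [0,1]) form a
   distributive lattice with bottom 1/0 and top 1/1, matrix composition is an
   ordinary semiring product, and the bi-fuzzy tensor satisfies the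
   mixed-product rule (x ⊗ y) ⊙ (A ⊗ B) = (x ⊙ A) ⊗ (y ⊙ B).  As A_mn is
   A_m ⊗ A_n, running G1 ∥ G2 along s computes the tensor of the two runs,
   and closing it with A_mn^T yields L_G1(s) ⊓ L_G2(s). *)

From HB Require Import structures.
From mathcomp Require Import all_boot all_order all_algebra.
From mathcomp Require Import boolp classical_sets reals.
From mathcomp Require Import lra zify.
Set Implicit Arguments. Unset Strict Implicit. Unset Printing Implicit Defensive.
Import Order.TTheory GRing.Theory Num.Theory.
Local Open Scope ring_scope.
Local Open Scope classical_set_scope.

(* Proves lattice inequalities between min/max terms of an ordered field:
   conjunctive decompositions are split, disjunctive ones are searched, and
   the remaining atoms go to lra. *)
Ltac minmax :=
  intros; rewrite ?le_min ?ge_max; repeat (apply/andP; split);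
  lazymatch goal with
  | |- is_true (Order.le (Order.min _ _) _) =>
      rewrite ge_min; apply/orP; first [left; minmax | right; minmax]
  | |- is_true (Order.le _ (Order.max _ _)) =>
      rewrite le_max; apply/orP; first [left; minmax | right; minmax]
  | _ => lra
  end.

(** * Left/right decomposition of convex normal truth values *)

Section LRSplit.
Variable R : realType.
Implicit Types (f g : fuzzy R) (a b c d : R -> R) (p q u w x y : R).

Lemma in01_0 : in01 (0 : R). Proof. by rewrite /in01 lexx ler01. Qed.
Lemma in01_1 : in01 (1 : R). Proof. by rewrite /in01 lexx ler01. Qed.

Lemma in01_min x y : in01 x -> in01 y -> in01 (Num.min x y).
Proof. by rewrite /in01 => /andP[? ?] /andP[? ?]; minmax. Qed.

Lemma in01_max x y : in01 x -> in01 y -> in01 (Num.max x y).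
Proof. by rewrite /in01 => /andP[? ?] /andP[? ?]; minmax. Qed.

Lemma in01_1subr x : in01 x -> in01 (1 - x).
Proof. by rewrite /in01 => /andP[? ?]; apply/andP; split; lra. Qed.

Lemma subr1_min x y : 1 - Num.min x y = Num.max (1 - x) (1 - y).
Proof. by case: (leP x y) => xy; [rewrite max_l | rewrite max_r]; lra. Qed.

Lemma subr1_max x y : 1 - Num.max x y = Num.min (1 - x) (1 - y).
Proof. by case: (leP x y) => xy; [rewrite min_r | rewrite min_l]; lra. Qed.

Record lr_split f a b p : Prop := LRSplit {
  split_peak01 : in01 p;
  split_L_peak : a p = 1;
  split_R_peak : b p = 1;
  split_min : forall x, in01 x -> f x = Num.min (a x) (b x);
  split_L_mono : forall x y, in01 x -> in01 y -> x <= y -> a x <= a y;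
  split_R_anti : forall x y, in01 x -> in01 y -> x <= y -> b y <= b x;
  split_bound : forall x, in01 x -> in01 (a x) /\ in01 (b x) }.

Section Split.
Variables (f : fuzzy R) (a b : R -> R) (p : R).
Hypothesis sf : lr_split f a b p.

Lemma split_L_le1 x : in01 x -> a x <= 1.
Proof. by move=> /(split_bound sf) [/andP[]]. Qed.

Lemma split_R_le1 x : in01 x -> b x <= 1.
Proof. by move=> /(split_bound sf) [_ /andP[]]. Qed.

Lemma split_le1 x : in01 x -> f x <= 1.
Proof. by move=> x01; rewrite (split_min sf x01) ge_min split_L_le1. Qed.

Lemma split_L_eq1 x : in01 x -> p <= x -> a x = 1.
Proof.
move=> x01 px; apply/le_anti; rewrite split_L_le1 //=.
by rewrite -{1}(split_L_peak sf) (split_L_mono sf) //; apply: split_peak01 sf.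
Qed.

Lemma split_R_eq1 x : in01 x -> x <= p -> b x = 1.
Proof.
move=> x01 xp; apply/le_anti; rewrite split_R_le1 //=.
by rewrite -{1}(split_R_peak sf) (split_R_anti sf) //; apply: split_peak01 sf.
Qed.

Lemma split_R_at0 : b 0 = 1.
Proof. by apply: (split_R_eq1 in01_0); case/andP: (split_peak01 sf). Qed.

Lemma split_L_at1 : a 1 = 1.
Proof. by apply: (split_L_eq1 in01_1); case/andP: (split_peak01 sf). Qed.

Lemma split_L_le_min x : in01 x -> a x <= f (Num.min x p).
Proof.
move=> x01; have p01 := split_peak01 sf; have xp01 := in01_min x01 p01.
rewrite (split_min sf xp01) (split_R_eq1 xp01); last by rewrite ge_min lexx orbT.
rewrite [Num.min _ 1]min_l; last exact: split_L_le1.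
by case: (leP x p) => // _; rewrite (split_L_peak sf) split_L_le1.
Qed.
End Split.

Lemma fjoin_split_eq f g a b c d p q x :
  lr_split f a b p -> lr_split g c d q -> in01 x ->
  fjoin f g x = Num.min (Num.min (a x) (c x)) (Num.max (b x) (d x)).
Proof.
move=> sf sg x01; rewrite /fjoin; set S := [set r | _].
have S_le1 r : S r -> r <= 1.
  by case=> u [w [u01 _ _ ->]]; rewrite ge_min (split_le1 sf u01).
have S_le_sup u w : in01 u -> in01 w -> Num.max u w = x ->
    Num.min (f u) (g w) <= sup S.
  by move=> u01 w01 uwx; apply: ub_le_sup; [exists 1 | exists u, w].
apply/le_anti/andP; split.
  apply: ge_sup => [|r [u [w [u01 w01 uwx ->]]]].
    by exists (Num.min (f x) (g x)), x, x; rewrite maxxx.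
  rewrite (split_min sf u01) (split_min sg w01).
  case: (leP u w) uwx => uw <-.
    by have := split_L_mono sf u01 w01 uw; minmax.
  by have := split_L_mono sg w01 u01 (ltW uw); minmax.
have [p01 q01] := (split_peak01 sf, split_peak01 sg).
(* Witnesses below the sup: the pairs (x, min x q) and (min x p, x). *)
case/orP: (le_total (d x) (b x)) => dbx.
  apply: le_trans (S_le_sup _ _ x01 (in01_min x01 q01) (minKx _ _)).
  by rewrite (split_min sf x01); have := split_L_le_min sg x01; minmax.
apply: le_trans (S_le_sup _ _ (in01_min x01 p01) x01 _); last first.
  by rewrite maxC minKx.
by rewrite (split_min sg x01); have := split_L_le_min sf x01; minmax.
Qed.

Lemma lr_split_fjoin f g a b c d p q :
  lr_split f a b p -> lr_split g c d q ->
  lr_split (fjoin f g) (fun x => Num.min (a x) (c x))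
    (fun x => Num.max (b x) (d x)) (Num.max p q).
Proof.
move=> sf sg; have [p01 q01] := (split_peak01 sf, split_peak01 sg).
have pq01 := in01_max p01 q01.
split => //=.
- by rewrite (split_L_eq1 sf) ?(split_L_eq1 sg) ?minxx // le_max lexx ?orbT.
- case: (leP p q) => pq.
    by rewrite (split_R_peak sg) max_r // (split_R_le1 sf q01).
  by rewrite (split_R_peak sf) max_l // (split_R_le1 sg p01).
- by move=> x x01; rewrite (fjoin_split_eq sf sg x01).
- move=> x y x01 y01 xy.
  by have := split_L_mono sf x01 y01 xy; have := split_L_mono sg x01 y01 xy; minmax.
- move=> x y x01 y01 xy.
  by have := split_R_anti sf x01 y01 xy; have := split_R_anti sg x01 y01 xy; minmax.
- move=> x x01; have [ax01 bx01] := split_bound sf x01.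
  by have [cx01 dx01] := split_bound sg x01; split; [apply: in01_min | apply: in01_max].
Qed.

Lemma lr_split_ext f a b f' a' b' p : lr_split f a b p ->
    (forall x, in01 x -> [/\ f' x = f x, a' x = a x & b' x = b x]) ->
  lr_split f' a' b' p.
Proof.
move=> sf E; have p01 := split_peak01 sf; split => //.
- by have [_ -> _] := E p p01; apply: split_L_peak sf.
- by have [_ _ ->] := E p p01; apply: split_R_peak sf.
- by move=> x x01; have [-> -> ->] := E x x01; exact (split_min sf x01).
- move=> x y x01 y01; have [_ -> _] := E x x01; have [_ -> _] := E y y01.
  exact (split_L_mono sf x01 y01).
- move=> x y x01 y01; have [_ _ ->] := E x x01; have [_ _ ->] := E y y01.
  exact (split_R_anti sf x01 y01).
- by move=> x x01; have [_ -> ->] := E x x01; exact (split_bound sf x01).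
Qed.

Lemma lr_split_reflect f a b p : lr_split f a b p ->
  lr_split (fun x => f (1 - x)) (fun x => b (1 - x)) (fun x => a (1 - x)) (1 - p).
Proof.
move=> sf; split => /=.
- exact/in01_1subr/(split_peak01 sf).
- by rewrite subKr (split_R_peak sf).
- by rewrite subKr (split_L_peak sf).
- by move=> x /in01_1subr x01; rewrite (split_min sf x01) minC.
- move=> x y /in01_1subr x01 /in01_1subr y01 xy.
  by apply: (split_R_anti sf) => //; rewrite lerD2l lerN2.
- move=> x y /in01_1subr x01 /in01_1subr y01 xy.
  by apply: (split_L_mono sf) => //; rewrite lerD2l lerN2.
- by move=> x /in01_1subr /(split_bound sf) [].
Qed.

Lemma fmeet_reflect f g v :
  fmeet f g v = fjoin (fun x => f (1 - x)) (fun x => g (1 - x)) (1 - v).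
Proof.
rewrite /fmeet /fjoin; congr sup; apply/seteqP; split=> r [u [w [u01 w01 uwv ->]]];
  exists (1 - u), (1 - w); split; rewrite ?subKr //; try exact: in01_1subr.
  by rewrite -uwv subr1_min.
by rewrite -[v](subKr 1) -uwv subr1_max.
Qed.

Lemma lr_split_fmeet f g a b c d p q :
  lr_split f a b p -> lr_split g c d q ->
  lr_split (fmeet f g) (fun x => Num.max (a x) (c x))
    (fun x => Num.min (b x) (d x)) (Num.min p q).
Proof.
move=> sf sg; rewrite -[Num.min p q](subKr 1) subr1_min.
apply: lr_split_ext
  (lr_split_reflect (lr_split_fjoin (lr_split_reflect sf) (lr_split_reflect sg))) _.
by move=> x _ /=; rewrite fmeet_reflect !subKr.
Qed.

Lemma NCFD_lr_split f : NCFD f -> exists p,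
  lr_split f (fun x => if x <= p then f x else 1)
             (fun x => if p <= x then f x else 1) p.
Proof.
case=> f01 [[p p01 fp1] cvx]; exists p.
have f_le1 x : in01 x -> f x <= 1 by case/f01/andP.
have f_up x y : in01 x -> in01 y -> x <= y <= p -> f x <= f y.
  by move=> x01 y01 /(cvx _ _ _ x01 p01); rewrite fp1 min_l ?f_le1.
have f_down x y : in01 x -> in01 y -> p <= x <= y -> f y <= f x.
  by move=> x01 y01 /(cvx _ _ _ p01 y01); rewrite fp1 min_r ?f_le1.
split => //=; rewrite ?lexx //.
- move=> x x01; case: (ltgtP x p) => [xp|px|->]; last by rewrite minxx.
    by rewrite min_l ?f_le1.
  by rewrite min_r ?f_le1.
- move=> x y x01 y01 xy; case: (leP y p) => yp; last by case: ifP; rewrite ?f_le1.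
  by rewrite (le_trans xy yp) f_up // xy.
- move=> x y x01 y01 xy; case: (leP p x) => px; last by case: ifP; rewrite ?f_le1.
  by rewrite (le_trans px xy) f_down // px.
- by move=> x /f01 fx01; rewrite /in01; case: ifP; case: ifP; rewrite ?lexx ?ler01.
Qed.

Lemma lr_split_fbot : lr_split (@fbot R) (fun _ => 1) (@fbot R) 0.
Proof.
rewrite /fbot /fsingle; split => //=; rewrite ?eqxx //.
- exact: in01_0.
- by move=> x _; case: eqP; rewrite ?minxx ?min_r ?ler01.
- move=> x y /andP[x0 _] _ xy; case: eqP => [y0|_].
    have -> : x = 0 by apply/le_anti; rewrite x0 andbT -y0.
    by rewrite eqxx.
  by case: ifP; rewrite ?ler01.
- by move=> x _; rewrite /in01; case: ifP; rewrite ?lexx ?ler01.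
Qed.

Lemma lr_split_ftop : lr_split (@ftop R) (@ftop R) (fun _ => 1) 1.
Proof.
rewrite /ftop /fsingle; split => //=; rewrite ?eqxx //.
- exact: in01_1.
- by move=> x _; case: eqP; rewrite ?minxx ?min_l ?ler01.
- move=> x y _ /andP[_ y1] xy; case: (x =P 1) => [x1|_].
    have -> : y = 1 by apply/le_anti; rewrite y1 -x1.
    by rewrite eqxx.
  by case: ifP; rewrite ?lexx ?ler01.
- by move=> x _; rewrite /in01; case: ifP; rewrite ?lexx ?ler01.
Qed.

(* The convex normal truth values that vanish outside [0,1]: these are the
   values of ⊔ and ⊓, which only read their arguments on [0,1]. *)
Definition regular f : Prop :=
  (exists a b p, lr_split f a b p) /\ forall v, ~ in01 v -> f v = 0.

Lemma fjoin_out01 f g v : ~ in01 v -> fjoin f g v = 0.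
Proof.
move=> v01; rewrite /fjoin (_ : [set r | _] = set0) ?sup0 //.
apply/seteqP; split=> // r [u [w [u01 w01 uwv _]]].
by apply: v01; rewrite -uwv; apply: in01_max.
Qed.

Lemma fmeet_out01 f g v : ~ in01 v -> fmeet f g v = 0.
Proof.
move=> v01; rewrite /fmeet (_ : [set r | _] = set0) ?sup0 //.
apply/seteqP; split=> // r [u [w [u01 w01 uwv _]]].
by apply: v01; rewrite -uwv; apply: in01_min.
Qed.

Lemma regular_fjoin f g : regular f -> regular g -> regular (fjoin f g).
Proof.
move=> [[a [b [p sf]]] _] [[c [d [q sg]]] _]; split; last exact: fjoin_out01.
by do 3 eexists; apply: lr_split_fjoin sf sg.
Qed.

Lemma regular_fmeet f g : regular f -> regular g -> regular (fmeet f g).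
Proof.
move=> [[a [b [p sf]]] _] [[c [d [q sg]]] _]; split; last exact: fmeet_out01.
by do 3 eexists; apply: lr_split_fmeet sf sg.
Qed.

Lemma regular_fbot : regular (@fbot R).
Proof.
split; first by do 3 eexists; apply: lr_split_fbot.
move=> v v01; rewrite /fbot /fsingle; case: eqP => // v0.
by case: v01; rewrite v0; apply: in01_0.
Qed.

Lemma regular_ftop : regular (@ftop R).
Proof.
split; first by do 3 eexists; apply: lr_split_ftop.
move=> v v01; rewrite /ftop /fsingle; case: eqP => // v1.
by case: v01; rewrite v1; apply: in01_1.
Qed.

Lemma regular_eq f g : regular f -> regular g -> (forall x, in01 x -> f x = g x) -> f = g.
Proof.
move=> [_ f0] [_ g0] fg; apply/funext => v.
by case: (pselect (in01 v)) => v01; [apply: fg | rewrite f0 ?g0].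
Qed.

(* NCFD constrains a fuzzy set only on [0,1]; [trunc01] normalises it. *)
Definition trunc01 f : fuzzy R := fun v => if 0 <= v <= 1 then f v else 0.

Lemma NCFD_regular f : NCFD f -> regular (trunc01 f).
Proof.
move=> /NCFD_lr_split [p sf]; split.
  do 3 eexists; apply: lr_split_ext sf _ => x x01.
  by rewrite /trunc01 x01.
by move=> v v01; rewrite /trunc01; case: ifP => // v01'; case: v01.
Qed.

Lemma trunc01_id f : regular f -> trunc01 f = f.
Proof.
move=> [_ f0]; apply/funext => v; rewrite /trunc01.
by case: ifP => // /negbT v01; rewrite f0 //; apply/negP.
Qed.

Lemma fmeet_trunc01 f g : fmeet (trunc01 f) (trunc01 g) = fmeet f g.
Proof.
apply/funext => v; rewrite /fmeet; congr sup; apply/seteqP.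
by split=> r [u [w [u01 w01 uwv ->]]]; exists u, w; rewrite /trunc01 u01 w01.
Qed.

End LRSplit.

(** * The distributive lattice of regular truth values *)

Record nfuzzy (R : realType) := NFuzzy { nval : fuzzy R; nvalP : regular nval }.

Section NFuzzyLattice.
Variable R : realType.
Implicit Types x y z : nfuzzy R.

Lemma nfuzzy_eq x y : (forall t, in01 t -> nval x t = nval y t) -> x = y.
Proof.
case: x y => f rf [g rg] /= /(regular_eq rf rg) fg; subst g.
by congr NFuzzy; apply: Prop_irrelevance.
Qed.

Lemma nval_split x : exists a b p, lr_split (nval x) a b p.
Proof. by case: (nvalP x). Qed.

Definition njoin x y := NFuzzy (regular_fjoin (nvalP x) (nvalP y)).
Definition nmeet x y := NFuzzy (regular_fmeet (nvalP x) (nvalP y)).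
Definition nbot := NFuzzy (@regular_fbot R).
Definition ntop := NFuzzy (@regular_ftop R).

Lemma njoinA : associative njoin.
Proof.
move=> x y z; apply: nfuzzy_eq => t t01 /=.
have [a [b [p sx]]] := nval_split x; have [c [d [q sy]]] := nval_split y.
have [e [h [r sz]]] := nval_split z.
rewrite (split_min (lr_split_fjoin sx (lr_split_fjoin sy sz)) t01).
rewrite (split_min (lr_split_fjoin (lr_split_fjoin sx sy) sz) t01).
by rewrite /= (minA (a t)) maxA.
Qed.

Lemma njoinC : commutative njoin.
Proof.
move=> x y; apply: nfuzzy_eq => t t01 /=.
have [a [b [p sx]]] := nval_split x; have [c [d [q sy]]] := nval_split y.
rewrite (split_min (lr_split_fjoin sx sy) t01).
by rewrite (split_min (lr_split_fjoin sy sx) t01) /= (minC (a t)) (maxC (b t)).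
Qed.

Lemma nmeetA : associative nmeet.
Proof.
move=> x y z; apply: nfuzzy_eq => t t01 /=.
have [a [b [p sx]]] := nval_split x; have [c [d [q sy]]] := nval_split y.
have [e [h [r sz]]] := nval_split z.
rewrite (split_min (lr_split_fmeet sx (lr_split_fmeet sy sz)) t01).
rewrite (split_min (lr_split_fmeet (lr_split_fmeet sx sy) sz) t01).
by rewrite /= maxA (minA (b t)).
Qed.

Lemma nmeetC : commutative nmeet.
Proof.
move=> x y; apply: nfuzzy_eq => t t01 /=.
have [a [b [p sx]]] := nval_split x; have [c [d [q sy]]] := nval_split y.
rewrite (split_min (lr_split_fmeet sx sy) t01).
by rewrite (split_min (lr_split_fmeet sy sx) t01) /= (maxC (a t)) (minC (b t)).
Qed.

Lemma nmeetUl : left_distributive nmeet njoin.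
Proof.
move=> x y z; apply: nfuzzy_eq => t t01 /=.
have [a [b [p sx]]] := nval_split x; have [c [d [q sy]]] := nval_split y.
have [e [h [r sz]]] := nval_split z.
rewrite (split_min (lr_split_fmeet (lr_split_fjoin sx sy) sz) t01).
rewrite (split_min (lr_split_fjoin (lr_split_fmeet sx sz) (lr_split_fmeet sy sz)) t01).
by rewrite /= (max_minl (a t)) (min_maxl (b t)).
Qed.

Lemma nmeetUr : right_distributive nmeet njoin.
Proof. by move=> x y z; rewrite nmeetC nmeetUl !(nmeetC x). Qed.

Lemma njoin0x : left_id nbot njoin.
Proof.
move=> x; apply: nfuzzy_eq => t t01 /=; have [a [b [p sx]]] := nval_split x.
rewrite (split_min (lr_split_fjoin (lr_split_fbot R) sx) t01) (split_min sx t01) /=.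
have [/andP[a0 a1] /andP[b0 b1]] := split_bound sx t01.
rewrite /fbot /fsingle; case: eqP => [t0|_]; last by apply/le_anti; minmax.
by subst t; rewrite (split_R_at0 sx); apply/le_anti; minmax.
Qed.

Lemma nmeet0x : left_zero nbot nmeet.
Proof.
move=> x; apply: nfuzzy_eq => t t01 /=; have [a [b [p sx]]] := nval_split x.
rewrite (split_min (lr_split_fmeet (lr_split_fbot R) sx) t01) /=.
have [/andP[a0 a1] /andP[b0 b1]] := split_bound sx t01.
rewrite /fbot /fsingle; case: eqP => [t0|_]; last by apply/le_anti; minmax.
by subst t; rewrite (split_R_at0 sx); apply/le_anti; minmax.
Qed.

Lemma nmeetx0 : right_zero nbot nmeet.
Proof. by move=> x; rewrite nmeetC nmeet0x. Qed.

Lemma nmeetx1 : right_id ntop nmeet.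
Proof.
move=> x; apply: nfuzzy_eq => t t01 /=; have [a [b [p sx]]] := nval_split x.
rewrite (split_min (lr_split_fmeet sx (lr_split_ftop R)) t01) (split_min sx t01) /=.
have [/andP[a0 a1] /andP[b0 b1]] := split_bound sx t01.
rewrite /ftop /fsingle; case: eqP => [t1|_]; last by apply/le_anti; minmax.
by subst t; rewrite (split_L_at1 sx); apply/le_anti; minmax.
Qed.

End NFuzzyLattice.

HB.instance Definition _ (R : realType) :=
  Monoid.isComLaw.Build (nfuzzy R) (nbot R) (@njoin R)
    (@njoinA R) (@njoinC R) (@njoin0x R).
HB.instance Definition _ (R : realType) :=
  Monoid.isMulLaw.Build (nfuzzy R) (nbot R) (@nmeet R) (@nmeet0x R) (@nmeetx0 R).
HB.instance Definition _ (R : realType) :=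
  Monoid.isAddLaw.Build (nfuzzy R) (@nmeet R) (@njoin R) (@nmeetUl R) (@nmeetUr R).

(** * Matrices of truth values and the tensor product *)

Section TensorIndex.
Variables m n : nat.

Lemma tens_index_proof (i : 'I_m) (j : 'I_n) : (i * n + j < m * n)%N.
Proof. by have := ltn_ord i; have := ltn_ord j; nia. Qed.

Definition tens_index (ij : 'I_m * 'I_n) : 'I_(m * n) :=
  Ordinal (tens_index_proof ij.1 ij.2).

Lemma tens_rowK ij : tens_row (tens_index ij) = ij.1.
Proof.
case: ij => i j; apply: val_inj => /=; have jn := ltn_ord j.
by rewrite divnMDl ?divn_small ?addn0 //; apply: leq_ltn_trans jn.
Qed.

Lemma tens_colK ij : tens_col (tens_index ij) = ij.2.
Proof. by apply: val_inj; rewrite /= modnMDl modn_small. Qed.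

Lemma tens_indexK (t : 'I_(m * n)) : tens_index (tens_row t, tens_col t) = t.
Proof. by apply: val_inj; rewrite /= -divn_eq. Qed.

Lemma big_tens_index T (idx : T) (op : Monoid.com_law idx) (F : 'I_m -> 'I_n -> T) :
  \big[op/idx]_(t < m * n) F (tens_row t) (tens_col t) =
  \big[op/idx]_(i < m) \big[op/idx]_(j < n) F i j.
Proof.
rewrite pair_big (reindex tens_index) /=.
  by apply: eq_bigr => ij _; rewrite tens_rowK tens_colK.
exists (fun t => (tens_row t, tens_col t)) => [[i j] _ | t _].
  by rewrite tens_rowK tens_colK.
exact: tens_indexK.
Qed.

End TensorIndex.

Section FuzzyMatrices.
Variable R : realType.
Local Notation fuzzy := (fuzzy R).

Definition nlift (f : fuzzy) : nfuzzy R :=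
  if pselect (regular f) is left rf then NFuzzy rf else nbot R.

Lemma nliftK f : regular f -> nval (nlift f) = f.
Proof. by rewrite /nlift; case: pselect. Qed.

Lemma nval_join k (F : 'I_k -> nfuzzy R) :
  nval (\big[@njoin R/nbot R]_(i < k) F i) = \big[@fjoin R/@fbot R]_(i < k) nval (F i).
Proof. exact: (big_morph (@nval R) (fun _ _ => erefl) erefl). Qed.

Lemma nval_meet (x y : nfuzzy R) : fmeet (nval x) (nval y) = nval (nmeet x y).
Proof. by []. Qed.

Definition regular_mx k l (A : 'M[fuzzy]_(k, l)) := forall i j, regular (trunc01 (A i j)).

Definition nentry k l (A : 'M[fuzzy]_(k, l)) i j := nlift (trunc01 (A i j)).

Lemma NCFD_regular_mx k l (A : 'M[fuzzy]_(k, l)) : NCFD_mx A -> regular_mx A.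
Proof. by move=> A_ncfd i j; apply: NCFD_regular. Qed.

Lemma regular_mx_of k l (A : 'M[fuzzy]_(k, l)) :
  (forall i j, regular (A i j)) -> regular_mx A.
Proof. by move=> rA i j; rewrite trunc01_id. Qed.

Lemma fcomp_nentry k l p (A : 'M[fuzzy]_(k, l)) (B : 'M[fuzzy]_(l, p)) i j :
  regular_mx A -> regular_mx B ->
  fcomp A B i j =
    nval (\big[@njoin R/nbot R]_(y < l) nmeet (nentry A i y) (nentry B y j)).
Proof.
move=> rA rB; rewrite mxE nval_join; apply: eq_bigr => y _.
by rewrite /= !nliftK // fmeet_trunc01.
Qed.

Lemma regular_fcomp k l p (A : 'M[fuzzy]_(k, l)) (B : 'M[fuzzy]_(l, p)) :
  regular_mx A -> regular_mx B -> regular_mx (fcomp A B).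
Proof.
by move=> rA rB; apply: regular_mx_of => i j; rewrite fcomp_nentry //; apply: nvalP.
Qed.

Lemma regular_ftens k l p q (A : 'M[fuzzy]_(k, l)) (B : 'M[fuzzy]_(p, q)) :
  regular_mx A -> regular_mx B -> regular_mx (ftens A B).
Proof.
move=> rA rB; apply: regular_mx_of => i j.
by rewrite mxE -fmeet_trunc01; apply: regular_fmeet.
Qed.

Lemma nentry_ftens k l p q (A : 'M[fuzzy]_(k, l)) (B : 'M[fuzzy]_(p, q)) i j :
  regular_mx A -> regular_mx B ->
  nentry (ftens A B) i j =
    nmeet (nentry A (tens_row i) (tens_row j)) (nentry B (tens_col i) (tens_col j)).
Proof.
move=> rA rB; apply: nfuzzy_eq => t _; rewrite /nentry /= !nliftK //.
  by rewrite mxE -fmeet_trunc01 trunc01_id //; apply: regular_fmeet.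
exact: regular_ftens.
Qed.

Lemma fcomp_ftens k k' l l' p p' (x : 'M[fuzzy]_(k, l)) (y : 'M[fuzzy]_(k', l'))
    (A : 'M[fuzzy]_(l, p)) (B : 'M[fuzzy]_(l', p')) :
  regular_mx x -> regular_mx y -> regular_mx A -> regular_mx B ->
  fcomp (ftens x y) (ftens A B) = ftens (fcomp x A) (fcomp y B).
Proof.
move=> rx ry rA rB; apply/matrixP => i j.
rewrite [RHS]mxE !fcomp_nentry //; try exact: regular_ftens.
rewrite nval_meet; congr nval; rewrite big_distrlr -big_tens_index /=.
apply: eq_bigr => t _; rewrite !nentry_ftens //.
by rewrite -!nmeetA; congr nmeet; rewrite !nmeetA (nmeetC (nentry A _ _)).
Qed.

Lemma fmeet_ftop : fmeet (@ftop R) (@ftop R) = @ftop R.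
Proof. exact: (congr1 (@nval R) (nmeetx1 (ntop R))). Qed.

Lemma regular_fones_tr k : regular_mx (@fones R k)^T.
Proof. by apply: regular_mx_of => i j; rewrite !mxE; apply: regular_ftop. Qed.

Lemma fones_tr_ftens k l : (@fones R (k * l))^T = ftens (@fones R k)^T (@fones R l)^T.
Proof. by apply/matrixP => i j; rewrite !mxE fmeet_ftop. Qed.

Lemma fcomp_ftens_ones k l (x : 'rV[fuzzy]_k) (y : 'rV[fuzzy]_l) (i j : 'I_1) :
  regular_mx x -> regular_mx y ->
  fcomp (ftens x y : 'rV_(k * l)) (@fones R (k * l))^T i j =
  fmeet (fcomp x (@fones R k)^T i j) (fcomp y (@fones R l)^T i j).
Proof.
move=> rx ry; rewrite fones_tr_ftens.
rewrite (fcomp_ftens rx ry (@regular_fones_tr k) (@regular_fones_tr l)) mxE.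
by rewrite !(ord1 (tens_row _)) !(ord1 (tens_col _)) !(ord1 i) (ord1 j).
Qed.

Lemma regular_funit k : regular_mx (@funit R k).
Proof.
apply: regular_mx_of => i j; rewrite mxE.
by case: eqP => _; [apply: regular_ftop | apply: regular_fbot].
Qed.

Lemma regular_foldl E k p (N : E -> 'M[fuzzy]_k) (x : 'M[fuzzy]_(p, k)) s :
  regular_mx x -> (forall e, regular_mx (N e)) ->
  regular_mx (foldl (fun z e => fcomp z (N e)) x s).
Proof.
by elim: s x => [|e s IH] //= x rx rN; apply: IH => //; apply: regular_fcomp.
Qed.

Section Folds.
Variables (E : Type) (k l : nat).
Implicit Types s : seq E.
Variables (P : pred E) (M : E -> 'M[fuzzy]_(k * l)).
Variables (M1 : E -> 'M[fuzzy]_k) (M2 : E -> 'M[fuzzy]_l).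
Hypotheses (rM1 : forall e, regular_mx (M1 e)) (rM2 : forall e, regular_mx (M2 e)).
Hypothesis M_ftens : forall e, P e -> M e = ftens (M1 e) (M2 e).

Lemma foldl_fcomp_ftens p q (x : 'M[fuzzy]_(p, k)) (y : 'M[fuzzy]_(q, l)) s :
  regular_mx x -> regular_mx y -> all P s ->
  foldl (fun z e => fcomp z (M e)) (ftens x y) s =
  ftens (foldl (fun z e => fcomp z (M1 e)) x s) (foldl (fun z e => fcomp z (M2 e)) y s).
Proof.
elim: s x y => [|e s IH] //= x y rx ry /andP[Pe Ps].
by rewrite M_ftens // fcomp_ftens // IH //; apply: regular_fcomp.
Qed.

Lemma lang_with_ftens (x : 'rV[fuzzy]_k) (y : 'rV[fuzzy]_l) s :
  regular_mx x -> regular_mx y -> all P s ->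
  lang_with (ftens x y) M s = fmeet (lang_with x M1 s) (lang_with y M2 s).
Proof.
move=> rx ry; case: s => [|e s] Ps; first by rewrite /= fmeet_ftop.
rewrite /lang_with (foldl_fcomp_ftens rx ry Ps).
by rewrite fcomp_ftens_ones //; apply: regular_foldl.
Qed.
End Folds.

End FuzzyMatrices.

Theorem proposition4 (R : realType) (E : Type) (m n : nat)
    (G1 : bfa R E m) (G2 : bfa R E n) :
  bfa_wf G1 -> bfa_wf G2 ->
  forall s : seq E, all (predU (bfa_ev G1) (bfa_ev G2)) s ->
  forall v : R, in01 v ->
    lang (par G1 G2) s v = fmeet (lang_ext G1 s) (lang_ext G2 s) v.
Proof.
move=> [x1_ncfd _ T1_ncfd] [x2_ncfd _ T2_ncfd] s s_ev v _.
pose M1 e := if bfa_ev G1 e then bfa_trans G1 e else @funit R m.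
pose M2 e := if bfa_ev G2 e then bfa_trans G2 e else @funit R n.
have rM1 e : regular_mx (M1 e).
  by rewrite /M1; case: ifP => [/T1_ncfd/NCFD_regular_mx|_] //; apply: regular_funit.
have rM2 e : regular_mx (M2 e).
  by rewrite /M2; case: ifP => [/T2_ncfd/NCFD_regular_mx|_] //; apply: regular_funit.
have par_trans e : predU (bfa_ev G1) (bfa_ev G2) e ->
    bfa_trans (par G1 G2) e = ftens (M1 e) (M2 e).
  by rewrite /= /M1 /M2; case: (bfa_ev G1 e); case: (bfa_ev G2 e).
(* The identity holds as functions. *)
by rewrite /lang [bfa_x0 _]/= (lang_with_ftens rM1 rM2 par_trans) //;
  apply: NCFD_regular_mx.
Qed.
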